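(* Let $R$ be a Noetherian ring, let $N=Ry_1+\cdots+Ry_n$ be an $R$-module, and let $x,y\in N$. Write $Y_i=N/Ry_i$ and $Y=N/Ry$. (1) If $\operatorname{ht}(N^*(x)/Y^*(x))>1$, then $N^*(y)\subseteq\sqrt{N^*(x)}$. (2) If $\operatorname{ht}(N^*(x)/Y_i^*(x))>1$ for $1\le i\le n$, then $\sqrt{\operatorname{tr}(N)}=\sqrt{N^*(x)}$. In particular $\operatorname{ht}(\operatorname{tr}(N))\le\mu(N^* )$, unless $\operatorname{tr}(N)=R$.
   Context: For an $R$-module $X$ and $z\in X$, $X^*(z)=\{f(z)\mid f\in\operatorname{Hom}_R(X,R)\}$; $Y^*(x)$ denotes the order ideal of the image of $x$ in $Y$ (which is contained in $N^*(x)$). For ideals $I\subseteq J$, $\operatorname{ht}(J/I)$ is the height of $J/I$ in $R/I$. $\operatorname{tr}(N)=\sum_{z\in N}N^*(z)$ is the trace ideal; $N^*=\operatorname{Hom}_R(N,R)$ and $\mu$ is the minimal number of generators. *)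

From mathcomp Require Import all_boot all_order all_algebra.
Set Implicit Arguments. Unset Strict Implicit. Unset Printing Implicit Defensive.
Import GRing.Theory.
Local Open Scope ring_scope.

Section CommAlg.
Variable R : comNzRingType.

Definition ideal (I : R -> Prop) : Prop :=
  [/\ I 0, (forall a b, I a -> I b -> I (a + b)) & (forall r a, I a -> I (r * a))].

Definition subid (I J : R -> Prop) : Prop := forall a, I a -> J a.

Definition fin_gen_ideal (I : R -> Prop) : Prop :=
  exists (k : nat) (g : 'I_k -> R),
    forall a, I a <-> exists r : 'I_k -> R, a = \sum_(i < k) r i * g i.

Definition noetherian : Prop := forall I, ideal I -> fin_gen_ideal I.

Definition prime_ideal (P : R -> Prop) : Prop :=
  [/\ ideal P, ~ P 1 & forall a b, P (a * b) -> P a \/ P b].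

Definition radical (I : R -> Prop) : R -> Prop := fun a => exists k : nat, I (a ^+ k).

Definition prime_chain (I P : R -> Prop) (k : nat) : Prop :=
  exists p : nat -> R -> Prop,
    [/\ forall i, (i <= k)%N -> prime_ideal (p i),
        subid I (p 0%N),
        forall i, (i < k)%N -> subid (p i) (p i.+1) /\ exists a, p i.+1 a /\ ~ p i a
      & forall a, p k a <-> P a].

(* ht(J/I) >= k, height of J/I in R/I: every prime of R/I containing J/I
   (= prime of R containing J) has height >= k in R/I. *)
Definition ht_ge (I J : R -> Prop) (k : nat) : Prop :=
  forall P, prime_ideal P -> subid J P -> prime_chain I P k.

Definition ht_le (I J : R -> Prop) (m : nat) : Prop := ~ ht_ge I J m.+1.

Definition zero_ideal : R -> Prop := fun a => a = 0.

Variable N : lmodType R.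

Definition dual_elt (f : N -> R) : Prop :=
  forall (r : R) (u v : N), f (r *: u + v) = r * f u + f v.

Definition order_ideal (z : N) : R -> Prop :=
  fun a => exists f, dual_elt f /\ a = f z.

(* (N/Ry)^*(x): Hom_R(N/Ry, R) = { f in N^dual | f y = 0 } *)
Definition order_ideal_quot (y x : N) : R -> Prop :=
  fun a => exists f, [/\ dual_elt f, f y = 0 & a = f x].

Definition trace_ideal : R -> Prop :=
  fun a => exists (k : nat) (f : 'I_k -> N -> R) (z : 'I_k -> N),
    (forall i, dual_elt (f i)) /\ a = \sum_(i < k) f i (z i).

Definition dual_gen_by (m : nat) : Prop :=
  exists g : 'I_m -> N -> R, (forall i, dual_elt (g i)) /\
    forall f, dual_elt f -> exists r : 'I_m -> R,
      forall z, f z = \sum_(i < m) r i * g i z.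

Definition is_mu_dual (m : nat) : Prop :=
  dual_gen_by m /\ forall k, (k < m)%N -> ~ dual_gen_by k.

End CommAlg.

(* (1) If [f y] lay outside a minimal prime [q] of [N^*(x)], then [q] would be
   minimal over [p + R f(x)] for every prime [p] with [Y^*(x) <= p <= q], since
   [f(y) g - g(y) f] kills [y] for every [g] in [N^*]; Krull's principal ideal
   theorem then forbids a chain of length 2 from [Y^*(x)] up to [q].
   (2) Applying (1) to the generators [y_i] gives [tr(N) <= sqrt N^*(x) <= sqrt tr(N)].
   If [g_1, ..., g_m] generate [N^*] then [N^*(x) = (g_1(x), ..., g_m(x))], so by
   Krull's height theorem a minimal prime of [N^*(x)], which contains [tr(N)], has
   height at most [m].
   Both Krull theorems are proved here for Noetherian rings, localization at a
   prime [P] being modelled by [P]-saturated ideals. *)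

From mathcomp Require Import all_boot all_order all_algebra.
From mathcomp Require Import ring zify.
From Stdlib Require Import Classical IndefiniteDescription.
From Stdlib Require List.
Set Implicit Arguments. Unset Strict Implicit. Unset Printing Implicit Defensive.
Import GRing.Theory.
Local Open Scope ring_scope.

Section IdealTheory.
Variable R : comNzRingType.
Implicit Types (I J B P Q T : R -> Prop) (a b r : R).

Lemma subid_refl I : subid I I. Proof. by []. Qed.

Lemma not_subid I J : ~ subid I J -> exists2 a, I a & ~ J a.
Proof.
move=> nIJ; apply: NNPP => nex; apply: nIJ => a Ia.
by apply: NNPP => nJa; apply: nex; exists a.
Qed.

Lemma ideal0 I : ideal I -> I 0. Proof. by case. Qed.

Lemma idealD I a b : ideal I -> I a -> I b -> I (a + b).
Proof. by case=> _ + _; apply. Qed.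

Lemma idealMl I r a : ideal I -> I a -> I (r * a).
Proof. by case=> _ _; apply. Qed.

Lemma idealMr I r a : ideal I -> I a -> I (a * r).
Proof. by move=> iI Ia; rewrite mulrC; apply: idealMl. Qed.

Lemma idealB I a b : ideal I -> I a -> I b -> I (a - b).
Proof. by move=> iI Ia Ib; rewrite -mulN1r; apply: idealD => //; apply: idealMl. Qed.

Lemma ideal_sum I k (F : 'I_k -> R) : ideal I -> (forall i, I (F i)) -> I (\sum_(i < k) F i).
Proof. by move=> iI IF; apply: big_ind => //; [apply: ideal0 | move=> a b; apply: idealD]. Qed.

Lemma zero_ideal_ideal : ideal (@zero_ideal R).
Proof. by split=> [|a b -> ->|r a ->]; rewrite /zero_ideal ?addr0 ?mulr0. Qed.

Lemma prime_ideal_ideal P : prime_ideal P -> ideal P. Proof. by case. Qed.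

Lemma prime_ideal1 P : prime_ideal P -> ~ P 1. Proof. by case. Qed.

Lemma prime_idealM P a b : prime_ideal P -> P (a * b) -> P a \/ P b.
Proof. by case=> _ _; apply. Qed.

Lemma prime_ideal_notM P a b : prime_ideal P -> ~ P a -> ~ P b -> ~ P (a * b).
Proof. by move=> pP nPa nPb /(prime_idealM pP) []. Qed.

Lemma prime_idealX P a k : prime_ideal P -> P (a ^+ k) -> P a.
Proof.
move=> pP; elim: k => [|k IH]; first by rewrite expr0 => /(prime_ideal1 pP).
by rewrite exprS => /(prime_idealM pP) [].
Qed.

Lemma radical_ideal I : ideal I -> ideal (radical I).
Proof.
move=> iI; split.
- by exists 1%N; rewrite expr1; apply: ideal0.
- move=> a b [k Ik] [l Il]; exists (k + l)%N; rewrite exprDn.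
  apply: ideal_sum => // i; rewrite -mulr_natr; apply: idealMr => //.
  have [li | il] := leqP l i.
    have -> : b ^+ i = b ^+ (i - l) * b ^+ l by rewrite -exprD subnK.
    by apply: idealMl => //; apply: idealMl.
  have ki : (k <= k + l - i)%N by lia.
  have -> : a ^+ (k + l - i) = a ^+ (k + l - i - k) * a ^+ k by rewrite -exprD subnK.
  by apply: idealMr => //; apply: idealMl.
- by move=> r a [k Ik]; exists k; rewrite exprMn; apply: idealMl.
Qed.

Lemma radical_sub_prime I P : prime_ideal P -> subid I P -> subid (radical I) P.
Proof. by move=> pP sIP r [k /sIP]; apply: prime_idealX. Qed.

Lemma eq_radical I J : subid I J -> subid J (radical I) ->
  forall a, radical J a <-> radical I a.
Proof.
move=> sIJ sJI a; split=> [[k /sJI [l Ikl]] | [k Ik]]; last by exists k; apply: sIJ.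
by exists (k * l)%N; rewrite exprM.
Qed.

(* [saturation P I] is the contraction of the extension of [I] to the
   localization at [P]; the [P]-saturated ideals are exactly these contractions. *)
Definition saturated P I := forall s r, ~ P s -> I (s * r) -> I r.

Definition saturation P I := fun r => exists2 s, ~ P s & I (s * r).

Lemma saturation_ideal P I : prime_ideal P -> ideal I -> ideal (saturation P I).
Proof.
move=> pP iI; split.
- by exists 1; [apply: prime_ideal1 | rewrite mulr0; apply: ideal0].
- move=> a b [s nPs Isa] [t nPt Itb]; exists (s * t); first exact: prime_ideal_notM.
  have -> : s * t * (a + b) = t * (s * a) + s * (t * b) by ring.
  by apply: idealD => //; apply: idealMl.
- by move=> r a [s nPs Isa]; exists s => //; rewrite mulrCA; apply: idealMl.
Qed.

Lemma saturation_saturated P I : prime_ideal P -> saturated P (saturation P I).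
Proof.
by move=> pP s r nPs [t nPt Itsr]; exists (t * s); [apply: prime_ideal_notM | rewrite -mulrA].
Qed.

Lemma sub_saturation P I : prime_ideal P -> subid I (saturation P I).
Proof. by move=> pP r Ir; exists 1; [apply: prime_ideal1 | rewrite mul1r]. Qed.

Lemma saturation_mono P I J : subid I J -> subid (saturation P I) (saturation P J).
Proof. by move=> sIJ r [s nPs /sIJ]; exists s. Qed.

Definition adjoin I a := fun r => exists t c, I t /\ r = t + c * a.

Lemma adjoin_ideal I a : ideal I -> ideal (adjoin I a).
Proof.
move=> iI; split.
- by exists 0, 0; split; [apply: ideal0 | rewrite mul0r addr0].
- move=> _ _ [t [c [It ->]]] [t' [c' [It' ->]]]; exists (t + t'), (c + c').
  by split; [apply: idealD | ring].
- move=> r _ [t [c [It ->]]]; exists (r * t), (r * c).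
  by split; [apply: idealMl | ring].
Qed.

Lemma sub_adjoin I a : subid I (adjoin I a).
Proof. by move=> r Ir; exists r, 0; rewrite mul0r addr0. Qed.

Lemma adjoin_elt I a : I 0 -> adjoin I a a.
Proof. by move=> I0; exists 0, 1; rewrite mul1r add0r. Qed.

Lemma adjoin_min I a T : ideal T -> subid I T -> T a -> subid (adjoin I a) T.
Proof. by move=> iT sIT Ta _ [t [c [/sIT It ->]]]; apply: idealD => //; apply: idealMl. Qed.

Lemma adjoin_mono I J a : subid I J -> subid (adjoin I a) (adjoin J a).
Proof. by move=> sIJ _ [t [c [/sIJ Jt ->]]]; exists t, c. Qed.

Lemma adjoin_mul_ideal I a b u v : ideal I -> I (a * b) ->
  adjoin I a u -> adjoin I b v -> I (u * v).
Proof.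
move=> iI Iab [t1 [c1 [It1 ->]]] [t2 [c2 [It2 ->]]].
have -> : (t1 + c1 * a) * (t2 + c2 * b) =
    t1 * (t2 + c2 * b) + c1 * (a * t2) + c1 * c2 * (a * b) by ring.
apply: idealD => //; [apply: idealD => // | exact: idealMl].
  exact: idealMr.
by apply: idealMl => //; apply: idealMl.
Qed.

Definition ideal_plus I J := fun r => exists a b, [/\ I a, J b & r = a + b].

Lemma ideal_plus_ideal I J : ideal I -> ideal J -> ideal (ideal_plus I J).
Proof.
move=> iI iJ; split.
- by exists 0, 0; split; rewrite ?addr0 //; apply: ideal0.
- move=> _ _ [a [b [Ia Jb ->]]] [a' [b' [Ia' Jb' ->]]]; exists (a + a'), (b + b').
  by split; [apply: idealD | apply: idealD | ring].
- move=> r _ [a [b [Ia Jb ->]]]; exists (r * a), (r * b).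
  by split; [apply: idealMl | apply: idealMl | ring].
Qed.

Definition adjoin_family B k (a : 'I_k -> R) :=
  fun r => exists t (c : 'I_k -> R), B t /\ r = t + \sum_(i < k) c i * a i.

Lemma adjoin_family_min B k (a : 'I_k -> R) T : ideal T -> subid B T ->
  (forall i, T (a i)) -> subid (adjoin_family B a) T.
Proof.
move=> iT sBT Ta _ [t [c [/sBT Tt ->]]]; apply: idealD => //.
by apply: ideal_sum => // i; apply: idealMl.
Qed.

Lemma sub_adjoin_family B k (a : 'I_k -> R) : subid B (adjoin_family B a).
Proof.
by move=> r Br; exists r, (fun _ => 0); rewrite big1 ?addr0 // => i _; rewrite mul0r.
Qed.

Lemma adjoin_family_elt B k (a : 'I_k -> R) i : B 0 -> adjoin_family B a (a i).
Proof.
move=> B0; exists 0, (fun j => if j == i then 1 else 0); split => //.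
by rewrite add0r (bigD1 i) //= eqxx mul1r big1 ?addr0 // => j /negbTE ->; rewrite mul0r.
Qed.

Definition minimal_prime I P :=
  [/\ prime_ideal P, subid I P &
      forall T, prime_ideal T -> subid I T -> subid T P -> subid P T].

Lemma minimal_prime_mono I J P : minimal_prime I P -> subid I J -> subid J P ->
  minimal_prime J P.
Proof.
by case=> pP _ minP sIJ sJP; split => // T pT sJT; apply: minP => // r /sIJ /sJT.
Qed.

Lemma subid_chain (p : nat -> R -> Prop) k : (forall i, (i < k)%N -> subid (p i) (p i.+1)) ->
  forall i j, (i <= j)%N -> (j <= k)%N -> subid (p i) (p j).
Proof.
move=> st i j /subnK <-; elim: (j - i)%N => [|d IH] lek r; first by rewrite add0n.
by rewrite addSn in lek * => /(IH (ltnW lek)); apply: st.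
Qed.

Lemma subid_desc (J : nat -> R -> Prop) : (forall n, subid (J n.+1) (J n)) ->
  forall n m, (n <= m)%N -> subid (J m) (J n).
Proof.
move=> dJ n m /subnK <-; elim: (m - n)%N => [|d IH] // r.
by rewrite addSn => /dJ /IH.
Qed.

Lemma prime_chain_sub B P k : prime_chain B P k -> subid B P.
Proof.
case=> p [_ sB0 st eP] r /sB0 /(subid_chain (fun i lt => proj1 (st i lt)) (leq0n k) (leqnn k)).
exact: (eP r).1.
Qed.

Lemma prime_chain_last B P k : prime_chain B P k.+1 ->
  exists Q0, [/\ prime_ideal Q0, subid Q0 P, ~ subid P Q0 &
    forall Q, prime_ideal Q -> subid Q0 Q -> prime_chain B Q k].
Proof.
case=> p [pp sB0 st eP]; have [sk [e [pe npe]]] := st k (leqnn _).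
have chain := subid_chain (fun i lt => proj1 (st i lt)).
exists (p k); split; first exact/pp/leqW.
- by move=> r /sk /eP.
- by move=> sP; apply/npe/sP/eP.
move=> Q pQ sQ; exists (fun i => if (i < k)%N then p i else Q); split.
- by move=> i _; case: ifP => // ik; apply: pp; rewrite ltnW // ltnW.
- by rewrite /=; case: ifP => _ r /sB0 // /(chain 0%N k isT (leqW (leqnn k))) /sQ.
- move=> i ik; rewrite ik; case: ifP => [_ | /negbT]; first exact: st (ltnW ik).
  rewrite -leqNgt => ki; have ek : k = i.+1 by lia.
  subst k; have [sp [e' [pe' npe']]] := st i (ltnW ik).
  by split; [move=> r /sp /sQ | exists e'; split => //; apply: sQ].
- by move=> r; rewrite ltnn.
Qed.

End IdealTheory.

Section NoetherianRing.
Variable R : comNzRingType.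
Implicit Types (I J K M B P Q T : R -> Prop) (a b r s : R).
Hypothesis noeth : noetherian R.

Lemma noetherian_acc (c : nat -> R -> Prop) : (forall n, ideal (c n)) ->
  (forall n, subid (c n) (c n.+1)) -> exists n, subid (c n.+1) (c n).
Proof.
move=> ic inc.
have mono n m : (n <= m)%N -> subid (c n) (c m).
  by move=> nm; apply: (@subid_chain _ c m) => // i _; apply: inc.
pose U a := exists n, c n a.
have iU : ideal U.
  split; first by exists 0%N; apply: ideal0.
  - move=> a b [n Ha] [m Hb]; exists (maxn n m); apply: idealD => //.
      by apply: (mono n) Ha; apply: leq_maxl.
    by apply: (mono m) Hb; apply: leq_maxr.
  - by move=> r a [n Ha]; exists n; apply: idealMl.
have [k [g Hg]] := noeth iU.
have [m Hm] : exists m : 'I_k -> nat, forall i, c (m i) (g i).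
  apply: (functional_choice (fun i n => c n (g i))) => i.
  apply/Hg; exists (fun j => if j == i then 1 else 0).
  by rewrite (bigD1 i) //= eqxx mul1r big1 ?addr0 // => j /negbTE ->; rewrite mul0r.
exists (\max_(i < k) m i) => a Ha.
have [r ->] : exists r : 'I_k -> R, a = \sum_(i < k) r i * g i.
  by apply/Hg; exists (\max_(i < k) m i).+1.
apply: ideal_sum => // i; apply: idealMl => //; apply: (mono (m i)) => //.
exact: leq_bigmax.
Qed.

Lemma noetherian_maximal (F : (R -> Prop) -> Prop) : (exists I, ideal I /\ F I) ->
  exists I, [/\ ideal I, F I & forall J, ideal J -> F J -> subid I J -> subid J I].
Proof.
move=> [I0 [iI0 FI0]]; apply: NNPP => nmax.
pose S := {I | ideal I /\ F I}.
have [next Hnext] : exists next : S -> S, forall I : S,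
    subid (sval I) (sval (next I)) /\ ~ subid (sval (next I)) (sval I).
  apply: (functional_choice (fun I J : S => subid (sval I) (sval J) /\ ~ subid (sval J) (sval I))).
  move=> -[I [iI FI]]; apply: NNPP => nbig; apply: nmax.
  exists I; split => // J iJ FJ sIJ; apply: NNPP => nJI; apply: nbig.
  by exists (exist _ J (conj iJ FJ)).
pose c n := iter n next (exist _ I0 (conj iI0 FI0)).
have [n] := @noetherian_acc (sval \o c) (fun n => proj1 (svalP (c n)))
  (fun n => proj1 (Hnext (c n))).
exact: (proj2 (Hnext (c n))).
Qed.

Lemma prime_avoiding (S : R -> Prop) J : ideal J -> S 1 ->
  (forall a b, S a -> S b -> S (a * b)) -> (forall s, S s -> ~ J s) ->
  exists2 T, prime_ideal T & subid J T /\ forall s, S s -> ~ T s.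
Proof.
move=> iJ S1 SM nJS.
have [T [iT [sJT nTS] maxT]] := @noetherian_maximal
  (fun T => subid J T /\ forall s, S s -> ~ T s)
  (ex_intro _ J (conj iJ (conj (@subid_refl _ J) nJS))).
have meets a : ~ T a -> exists2 s, S s & adjoin T a s.
  move=> nTa; apply: NNPP => nmeet; apply: nTa.
  apply: (maxT _ (adjoin_ideal a iT) _ (@sub_adjoin _ T a)); last exact: adjoin_elt (ideal0 iT).
  split; first by move=> r /sJT /sub_adjoin.
  by move=> s Ss Ts; apply: nmeet; exists s.
exists T => //; split => //; first exact: nTS S1.
move=> a b Tab; apply: NNPP => /not_or_and [nTa nTb].
have [s1 Ss1 As1] := meets a nTa; have [s2 Ss2 As2] := meets b nTb.
exact: nTS (SM _ _ Ss1 Ss2) (adjoin_mul_ideal iT Tab As1 As2).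
Qed.

Definition colon I w := fun a => I (a * w).

Lemma colon_ideal I w : ideal I -> ideal (colon I w).
Proof.
move=> iI; split; rewrite /colon.
- by rewrite mul0r; apply: ideal0.
- by move=> a b Ia Ib; rewrite mulrDl; apply: idealD.
- by move=> r a Ia; rewrite -mulrA; apply: idealMl.
Qed.

(* a colon ideal maximal among the [colon I w], [w \notin I], is prime *)
Lemma exists_prime_colon I : ideal I -> ~ I 1 -> exists2 w, ~ I w & prime_ideal (colon I w).
Proof.
move=> iI nI1.
have [A [iA [w nIw eA] maxA]] := @noetherian_maximal
  (fun A => exists2 w, ~ I w & A = colon I w)
  (ex_intro _ (colon I 1) (conj (colon_ideal 1 iI) (ex_intro2 _ _ 1 nI1 erefl))).
subst A; exists w => //; split => //; first by rewrite /colon mul1r.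
move=> a b Iabw; case: (classic (colon I w a)) => [|nIaw]; [by left | right].
have sub : subid (colon I w) (colon I (a * w)).
  by move=> r Irw; rewrite /colon mulrCA; apply: idealMl.
apply: (maxA _ (colon_ideal _ iI) _ sub); first by exists (a * w).
by rewrite /colon mulrCA mulrA.
Qed.

Lemma nakayama_local P K M x : prime_ideal P -> P x -> ideal K ->
  (forall m, M m -> exists s k mu, [/\ ~ P s, K k, M mu & s * m = k + x * mu]) ->
  subid M (saturation P K).
Proof.
move=> pP Px iK H; apply: NNPP => nMK.
have [T [iT [satT sKT nMT] maxT]] := @noetherian_maximal
  (fun T => [/\ saturated P T, subid K T & ~ subid M T])
  (ex_intro _ _ (conj (saturation_ideal pP iK)
     (And3 (saturation_saturated (I := K) pP) (sub_saturation (I := K) pP) nMK))).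
have [m Mm nTm] := not_subid nMT.
have MT' : subid M (saturation P (adjoin T m)).
  apply: NNPP => nMT'; apply: nTm.
  apply: (maxT _ (saturation_ideal pP (adjoin_ideal m iT))).
  - split => //; first exact: saturation_saturated.
    by move=> r /sKT /sub_adjoin /(sub_saturation pP).
  - by move=> r /sub_adjoin /(sub_saturation pP).
  - exact: (sub_saturation pP (adjoin_elt m (ideal0 iT))).
have [s0 [k [mu [nPs0 Kk Mmu Em]]]] := H m Mm.
have [s nPs [t [c [Tt Est]]]] := MT' mu Mmu.
(* [s * s0 - x * c] is a unit at [P] killing [m] modulo [T] *)
apply: nTm; apply: (satT (s * s0 - x * c)).
  move=> Pd; apply: (prime_ideal_notM pP nPs nPs0).
  have -> : s * s0 = (s * s0 - x * c) + x * c by ring.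
  by apply: idealD (prime_ideal_ideal pP) Pd _; apply: idealMr (prime_ideal_ideal pP) Px.
have -> : (s * s0 - x * c) * m = s * k + x * t.
  have Et : t = s * mu - c * m by rewrite Est addrK.
  transitivity (s * (s0 * m) - x * c * m); first by ring.
  by rewrite Em Et; ring.
by apply: idealD => //; apply: idealMl => //; apply: sKT.
Qed.

(* [R_P / I R_P] is Artinian *)
Definition local_artinian P I := forall J : nat -> R -> Prop,
  (forall n, ideal (J n)) -> (forall n, saturated P (J n)) -> (forall n, subid I (J n)) ->
  (forall n, subid (J n.+1) (J n)) -> exists N, forall n, (N <= n)%N -> subid (J n) (J n.+1).

Lemma local_artinian_saturation P I : local_artinian P (saturation P I) -> local_artinian P I.
Proof.
move=> art J iJ satJ sIJ dJ; apply: art => // n r [s nPs /(sIJ n)].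
exact: satJ.
Qed.

Lemma desc_chain_mem_stable (J : nat -> R -> Prop) w : (forall n, subid (J n.+1) (J n)) ->
  exists N, forall n, (N <= n)%N -> J n w -> J n.+1 w.
Proof.
move=> dJ; case: (classic (forall n, J n w)) => [Jw | /not_all_ex_not [n0 nJw]].
  by exists 0%N => n _ _; apply: Jw.
by exists n0 => n le Jnw; exfalso; apply/nJw/(subid_desc dJ le).
Qed.

(* As [P w <= I], the module [R_P w] is simple modulo [I], so a descending chain
   over [I] stabilizes once its images over [I + R w] do. *)
Lemma local_artinian_adjoin P I w : prime_ideal P -> ideal I ->
  (forall p, P p -> I (p * w)) ->
  local_artinian P (saturation P (adjoin I w)) -> local_artinian P I.
Proof.
move=> pP iI PwI art' J iJ satJ sIJ dJ.
pose I' := saturation P (adjoin I w).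
have iI' : ideal I' := saturation_ideal pP (adjoin_ideal w iI).
pose J' n := saturation P (ideal_plus (J n) I').
have [N1 stJ'] : exists N1, forall n, (N1 <= n)%N -> subid (J' n) (J' n.+1).
  apply: art' => n.
  - exact: saturation_ideal pP (ideal_plus_ideal (iJ n) iI').
  - exact: saturation_saturated.
  - move=> r I'r; apply: sub_saturation => //.
    by exists 0, r; rewrite add0r; split => //; apply: ideal0.
  - by apply: saturation_mono => _ [a [b [Ja I'b ->]]]; exists a, b; split => //; apply: dJ.
have [N2 stw] := desc_chain_mem_stable w dJ.
exists (maxn N1 N2) => n; rewrite geq_max => /andP[le1 le2] r Jr.
have : J' n.+1 r.
  apply: stJ' => //; apply: sub_saturation => //.
  by exists r, 0; rewrite addr0; split => //; apply: ideal0.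
move=> [s nPs [j [i [Jj [s' nPs' [t [c [It Ei]]]] Esr]]]].
have Jni : J n i.
  have -> : i = s * r - j by rewrite Esr; ring.
  exact: idealB (iJ n) (idealMl _ (iJ n) Jr) (dJ n _ Jj).
suff Ji : J n.+1 i by apply: (satJ _ s) => //; rewrite Esr; apply: idealD (iJ _) Jj Ji.
apply: (satJ _ s') => //; rewrite Ei; apply: idealD (iJ _) (sIJ _ _ It) _.
case: (classic (P c)) => [Pc | nPc]; first exact: sIJ _ _ (PwI _ Pc).
apply: idealMl (iJ _) _; apply: stw => //; apply: (satJ _ c) => //.
have -> : c * w = s' * i - t by rewrite Ei; ring.
exact: idealB (iJ n) (idealMl _ (iJ n) Jni) (sIJ _ _ It).
Qed.

Lemma minimal_prime_local_artinian P I0 : ideal I0 -> minimal_prime I0 P ->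
  local_artinian P I0.
Proof.
move=> iI0 [pP _ minP]; apply: local_artinian_saturation; apply: NNPP => nart.
have [I [iI [satI sI0I nartI] maxI]] := @noetherian_maximal
  (fun I => [/\ saturated P I, subid (saturation P I0) I & ~ local_artinian P I])
  (ex_intro _ _ (conj (saturation_ideal pP iI0)
     (And3 (saturation_saturated (I := I0) pP) (@subid_refl _ _) nart))).
apply: nartI; case: (classic (I 1)) => [I1 | nI1].
  move=> J iJ _ sIJ _; exists 0%N => n _ r _.
  by rewrite -[r]mulr1; apply: idealMl _ (iJ _) (sIJ _ 1 I1).
have [w nIw pA] := exists_prime_colon iI nI1.
have PwI : subid P (colon I w).
  apply: minP => //; first by move=> r /(sub_saturation pP) /sI0I; apply: idealMr.
  by move=> r Irw; apply: NNPP => nPr; apply: nIw; apply: satI nPr Irw.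
apply: (local_artinian_adjoin pP iI PwI); apply: NNPP => nart'.
apply: nIw; apply: (maxI _ (saturation_ideal pP (adjoin_ideal w iI))).
- split => //; first exact: saturation_saturated.
  by move=> r /sI0I /sub_adjoin /(sub_saturation pP).
- by move=> r /sub_adjoin /(sub_saturation pP).
- exact: (sub_saturation pP (adjoin_elt w (ideal0 iI))).
Qed.

Lemma pow_notin_saturation_adjoin Q' Q q n : prime_ideal Q' -> prime_ideal Q -> subid Q' Q ->
  Q q -> ~ Q' q -> ~ saturation Q (adjoin Q' (q ^+ n.+1)) (q ^+ n).
Proof.
move=> pQ' pQ sQ'Q Qq nQ'q [t nQt [e [c [Q'e Ee]]]].
have : Q' ((t - c * q) * q ^+ n).
  by have -> : (t - c * q) * q ^+ n = e by rewrite mulrBl Ee exprS; ring.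
case/(prime_idealM pQ') => [/sQ'Q Qtcq | /(prime_idealX pQ') //].
apply: nQt; have -> : t = (t - c * q) + c * q by ring.
by apply: idealD (prime_ideal_ideal pQ) Qtcq _; apply: idealMl (prime_ideal_ideal pQ) Qq.
Qed.

(* With [D n] the [n]-th symbolic power of [q] modulo [Q'], the chain [D n + R x]
   stabilizes at [P], and Nakayama then makes [D n] itself stabilize, which
   [pow_notin_saturation_adjoin] forbids. *)
Lemma krull_principal_ideal Q' Q P x : prime_ideal Q' -> prime_ideal Q ->
  subid Q' Q -> ~ subid Q Q' -> subid Q P -> ~ subid P Q ->
  ~ minimal_prime (adjoin Q' x) P.
Proof.
move=> pQ' pQ sQ'Q nQQ' sQP nPQ minP; have [pP sQ'xP minP'] := minP.
have iQ' := prime_ideal_ideal pQ'.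
have [q Qq nQ'q] := not_subid nQQ'.
have nQx : ~ Q x.
  by move=> Qx; apply/nPQ/(minP' Q pQ _ sQP)/(adjoin_min (prime_ideal_ideal pQ) sQ'Q Qx).
pose D n := saturation Q (adjoin Q' (q ^+ n)).
have iD n : ideal (D n) := saturation_ideal pQ (adjoin_ideal _ iQ').
have dD n : subid (D n.+1) (D n).
  apply: saturation_mono => _ [t [c [Q't ->]]].
  by exists t, (c * q); rewrite exprS mulrA.
pose J n := saturation P (adjoin (D n) x).
have [N stJ] : exists N, forall n, (N <= n)%N -> subid (J n) (J n.+1).
  apply: (minimal_prime_local_artinian (adjoin_ideal x iQ') minP) => n.
  - exact: saturation_ideal pP (adjoin_ideal _ (iD n)).
  - exact: saturation_saturated.
  - move=> r /(adjoin_mono (fun r Q'r => sub_saturation pQ (sub_adjoin (q ^+ n) Q'r))).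
    exact: sub_saturation.
  - exact/saturation_mono/adjoin_mono/dD.
have DN : subid (D N) (saturation P (D N.+1)).
  apply: (nakayama_local pP (sQ'xP x (adjoin_elt x (ideal0 iQ'))) (iD N.+1)) => m Dm.
  have [s nPs [d [c [Dd Esm]]]] := stJ N (leqnn N) m (sub_saturation pP (sub_adjoin x Dm)).
  exists s, d, c; split => //; last by rewrite Esm mulrC.
  apply: (saturation_saturated pQ nQx).
  have -> : x * c = s * m - d by rewrite Esm; ring.
  by apply: idealB (iD N) _ (dD N _ Dd); apply: idealMl.
have [s nPs Dsq] := DN _ (sub_saturation pQ (adjoin_elt (q ^+ N) (ideal0 iQ'))).
apply: (pow_notin_saturation_adjoin pQ' pQ sQ'Q Qq nQ'q).
exact: (saturation_saturated pQ (fun Qs => nPs (sQP _ Qs)) Dsq).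
Qed.

Lemma minimal_prime_local_nilpotent J P z : ideal J -> minimal_prime J P -> P z ->
  exists s k, ~ P s /\ J (s * z ^+ k).
Proof.
move=> iJ [pP sJP minP] Pz; apply: NNPP => none.
pose S u := exists s k, ~ P s /\ u = s * z ^+ k.
have S1 : S 1 by exists 1, 0%N; split; [apply: prime_ideal1 | rewrite mulr1].
have SM a b : S a -> S b -> S (a * b).
  move=> [s1 [k1 [nP1 ->]]] [s2 [k2 [nP2 ->]]]; exists (s1 * s2), (k1 + k2)%N.
  by split; [apply: prime_ideal_notM | rewrite exprD; ring].
have nJS s : S s -> ~ J s by move=> [t [k [nPt ->]]] Jt; apply: none; exists t, k.
have [T pT [sJT nTS]] := prime_avoiding iJ S1 SM nJS.
have sTP : subid T P.
  move=> r Tr; apply: NNPP => nPr; apply: nTS Tr.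
  by exists r, 0%N; rewrite mulr1.
apply: (nTS z); last exact: minP.
by exists 1, 1%N; split; [apply: prime_ideal1 | rewrite mul1r].
Qed.

Definition radical_prime_cover I (l : list (R -> Prop)) :=
  (forall q, List.In q l -> prime_ideal q /\ subid I q) /\
  (forall r, (forall q, List.In q l -> q r) -> radical I r).

Lemma exists_radical_prime_cover I0 : ideal I0 -> exists l, radical_prime_cover I0 l.
Proof.
move=> iI0; apply: NNPP => ncov0.
have [I [iI ncov maxI]] := @noetherian_maximal
  (fun I => ~ exists l, radical_prime_cover I l) (ex_intro _ _ (conj iI0 ncov0)).
apply: ncov; case: (classic (I 1)) => [I1 | nI1].
  by exists nil; split => // r _; exists 0%N; rewrite expr0.
case: (classic (prime_ideal I)) => [pI | npI].
  exists [:: I]; split; first by move=> q [<- | []]; split.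
  by move=> r Ir; exists 1%N; rewrite expr1; apply: Ir; left.
have [a [b [Iab nIa nIb]]] : exists a b, [/\ I (a * b), ~ I a & ~ I b].
  apply: NNPP => nab; apply: npI; split => // a b Iab.
  by apply: NNPP => /not_or_and [nIa nIb]; apply: nab; exists a, b.
have cover c : ~ I c -> exists l, radical_prime_cover (adjoin I c) l.
  move=> nIc; apply: NNPP => ncov'; apply: nIc.
  exact: maxI _ (adjoin_ideal c iI) ncov' (@sub_adjoin _ I c) _ (adjoin_elt c (ideal0 iI)).
have [[la [Hla Rla]] [lb [Hlb Rlb]]] := (cover a nIa, cover b nIb).
exists (List.app la lb); split.
  move=> q qin; case: (List.in_app_or _ _ _ qin) => [/Hla | /Hlb] [pq sq];
    by split => // r Ir; apply: sq _ (sub_adjoin _ Ir).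
move=> r Hr.
have [k Ark] := Rla r (fun q Hq => Hr q (List.in_or_app _ _ _ (or_introl Hq))).
have [l Arl] := Rlb r (fun q Hq => Hr q (List.in_or_app _ _ _ (or_intror Hq))).
by exists (k + l)%N; rewrite exprD; apply: adjoin_mul_ideal Ark Arl.
Qed.

Lemma prime_sub_intersection (l : list (R -> Prop)) P : prime_ideal P ->
  (forall q, List.In q l -> ideal q) -> (forall r, (forall q, List.In q l -> q r) -> P r) ->
  exists2 q, List.In q l & subid q P.
Proof.
move=> pP; elim: l => [|h t IH] il sub; first by case: (prime_ideal1 pP); apply: sub.
case: (classic (subid h P)) => [hP | /not_subid [a ha nPa]].
  by exists h => //; left.
have [q qt qP] : exists2 q, List.In q t & subid q P.
  apply: IH => [q qt | r rt]; first by apply: il; right.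
  have /(prime_idealM pP) [//|//] : P (a * r).
  apply: sub => q [<- | qt]; first by apply: idealMr (il _ (or_introl erefl)) ha.
  by apply: idealMl (il _ (or_intror qt)) (rt q qt).
by exists q => //; right.
Qed.

Lemma list_minimal_sub (l : list (R -> Prop)) P : (exists2 q, List.In q l & subid q P) ->
  exists q, [/\ List.In q l, subid q P & forall q', List.In q' l -> subid q' q -> subid q q'].
Proof.
elim: l => [|h t IH] [q qin qP]; first by case: qin.
case: (classic (exists2 q, List.In q t & subid q P)) => [/IH [q' [q't q'P q'min]] | nt].
  case: (classic (subid h q')) => [hq' | nhq'].
    exists h; split; [by left | by move=> r /hq' /q'P |].
    move=> q'' [<- // | q''t] q''h r hr.
    by apply: (q'min q'' q''t (fun r h => hq' r (q''h r h))); apply: hq'.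
  by exists q'; split; [right | | move=> q'' [<- | /q'min]].
have hP : subid h P by case: qin => [-> // | qt]; case: nt; exists q.
exists h; split; [by left | by [] |].
by move=> q' [<- // | q't] q'h; case: nt; exists q' => // r /q'h /hP.
Qed.

Lemma minimal_prime_sub I P : ideal I -> prime_ideal P -> subid I P ->
  exists2 Q, minimal_prime I Q & subid Q P.
Proof.
move=> iI pP sIP; have [l [Hl Rl]] := exists_radical_prime_cover iI.
have below T : prime_ideal T -> subid I T -> exists2 q, List.In q l & subid q T.
  move=> pT sIT; apply: prime_sub_intersection => // [q /Hl [pq _] | r /Rl].
    exact: prime_ideal_ideal.
  exact: radical_sub_prime.
have [q [ql qP qmin]] := list_minimal_sub (below P pP sIP).
have [pq sIq] := Hl q ql.
exists q => //; split => // T pT sIT sTq.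
have [q' q'l q'T] := below T pT sIT.
by move=> r /(qmin q' q'l (fun r h => sTq r (q'T r h))) /q'T.
Qed.

Lemma minimal_prime_notin I a : ideal I -> ~ radical I a ->
  exists2 Q, minimal_prime I Q & ~ Q a.
Proof.
move=> iI nIa; have [l [Hl Rl]] := exists_radical_prime_cover iI.
have [q ql nqa] : exists2 q, List.In q l & ~ q a.
  apply: NNPP => H; apply/nIa/Rl => q ql; apply: NNPP => nqa; apply: H; by exists q.
have [pq sIq] := Hl q ql.
have [Q minQ Qq] := minimal_prime_sub iI pq sIq.
by exists Q => // /Qq.
Qed.

Lemma minimal_prime_exchange m B (a : 'I_m.+1 -> R) i0 (b : 'I_m -> R) P : ideal B ->
  minimal_prime (adjoin_family B a) P -> (forall j, P (b j)) ->
  (forall j, exists s k c, ~ P s /\ s * a (lift i0 j) ^+ k = b j + c * a i0) ->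
  minimal_prime (adjoin (adjoin_family B b) (a i0)) P.
Proof.
move=> iB [pP sBaP minP] Pb Hb; have iP := prime_ideal_ideal pP.
have Pa j : P (a j) by exact: sBaP _ (adjoin_family_elt a j (ideal0 iB)).
have sBP : subid B P by move=> r /(sub_adjoin_family a) /sBaP.
split => //; first exact: (adjoin_min iP (adjoin_family_min iP sBP Pb) (Pa i0)).
move=> T pT sT sTP; apply: minP => //; have iT := prime_ideal_ideal pT.
have Bb0 : adjoin_family B b 0 := sub_adjoin_family b (ideal0 iB).
have Ta : T (a i0) := sT _ (adjoin_elt (a i0) Bb0).
have Tb j : T (b j) := sT _ (sub_adjoin (a i0) (adjoin_family_elt b j (ideal0 iB))).
have sBT : subid B T by move=> r /(sub_adjoin_family b) /(sub_adjoin (a i0)) /sT.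
apply: (adjoin_family_min iT sBT) => j; case: (unliftP i0 j) => [j' -> | -> //].
have [s [k [c [nPs E]]]] := Hb j'.
have : T (s * a (lift i0 j') ^+ k) by rewrite E; apply: idealD iT (Tb j') (idealMl _ iT Ta).
by case/(prime_idealM pT) => [/sTP // | /(prime_idealX pT)].
Qed.

Lemma minimal_prime_drop_generator m B (a : 'I_m.+1 -> R) i0 Q P : ideal B ->
  prime_ideal Q -> subid B Q -> subid Q P -> ~ subid P Q ->
  minimal_prime (adjoin_family B a) P -> minimal_prime (adjoin Q (a i0)) P ->
  exists b : 'I_m -> R, minimal_prime (adjoin_family B b) Q.
Proof.
move=> iB pQ sBQ sQP nPQ minPa minPQ; have [pP sBaP _] := minPa.
have Pa j : P (a j) by exact: sBaP _ (adjoin_family_elt a j (ideal0 iB)).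
have [t Ht] : exists t : 'I_m.+1 -> R, forall j,
    Q (t j) /\ exists s k c, ~ P s /\ s * a j ^+ k = t j + c * a i0.
  apply: (functional_choice
    (fun j tj => Q tj /\ exists s k c, ~ P s /\ s * a j ^+ k = tj + c * a i0)) => j.
  have [s [k [nPs [tj [c [Qt E]]]]]] :=
    minimal_prime_local_nilpotent (adjoin_ideal (a i0) (prime_ideal_ideal pQ)) minPQ (Pa j).
  by exists tj; split => //; exists s, k, c.
exists (fun j => t (lift i0 j)).
have minPb := minimal_prime_exchange (b := fun j => t (lift i0 j)) iB minPa
  (fun j => sQP _ (Ht _).1) (fun j => (Ht _).2).
split => //.
  exact: (adjoin_family_min (prime_ideal_ideal pQ) sBQ (fun j => (Ht _).1)).
move=> T pT sbT sTQ; apply: NNPP => nQT.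
apply: (krull_principal_ideal pT pQ sTQ nQT sQP nPQ (x := a i0)).
apply: (minimal_prime_mono minPb (adjoin_mono sbT)).
exact: (adjoin_min (prime_ideal_ideal pP) (fun r Tr => sQP r (sTQ r Tr)) (Pa i0)).
Qed.

Lemma krull_height m B (a : 'I_m -> R) P : ideal B ->
  minimal_prime (adjoin_family B a) P -> ~ prime_chain B P m.+1.
Proof.
elim: m B a P => [|m IH] B a P iB minP /prime_chain_last [Q0 [pQ0 sQ0P nPQ0 chainQ]];
  have [pP sBaP minP'] := minP.
  apply/nPQ0/(minP' Q0 pQ0 _ sQ0P).
  have sBQ0 := prime_chain_sub (chainQ Q0 pQ0 (@subid_refl _ _)).
  by apply: (adjoin_family_min (prime_ideal_ideal pQ0) sBQ0); case.
have [Q [iQ [pQ sQ0Q sQP nPQ] maxQ]] := @noetherian_maximal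
  (fun Q => [/\ prime_ideal Q, subid Q0 Q, subid Q P & ~ subid P Q])
  (ex_intro _ Q0 (conj (prime_ideal_ideal pQ0) (And4 pQ0 (@subid_refl _ _) sQ0P nPQ0))).
have sBQ := prime_chain_sub (chainQ Q pQ sQ0Q).
have [i0 nQa] : exists i0, ~ Q (a i0).
  apply: NNPP => H; apply/nPQ/(minP' Q pQ _ sQP).
  apply: (adjoin_family_min iQ sBQ) => i.
  by apply: NNPP => nQ; apply: H; exists i.
have minQa : minimal_prime (adjoin Q (a i0)) P.
  split => //.
    exact: (adjoin_min (prime_ideal_ideal pP) sQP (sBaP _ (adjoin_family_elt a i0 (ideal0 iB)))).
  move=> T pT sT sTP; apply: NNPP => nPT; apply: nQa.
  apply: (maxQ T (prime_ideal_ideal pT)); last exact: (sT _ (adjoin_elt _ (ideal0 iQ))).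
    by split => // r /sQ0Q /(sub_adjoin (a i0)) /sT.
  by move=> r /(sub_adjoin (a i0)) /sT.
have [b minQb] := minimal_prime_drop_generator iB pQ sBQ sQP nPQ minP minQa.
exact: IH b Q iB minQb (chainQ Q pQ sQ0Q).
Qed.

End NoetherianRing.

Section OrderIdeals.
Variables (R : comNzRingType) (N : lmodType R).

Lemma dual_elt0 (f : N -> R) : dual_elt f -> f 0 = 0.
Proof.
move=> df; have := df 1 0 0; rewrite scaler0 addr0 mul1r => f0.
by apply: (addrI (f 0)); rewrite addr0 -f0.
Qed.

Lemma dual_eltZ (f : N -> R) r u : dual_elt f -> f (r *: u) = r * f u.
Proof. by move=> df; have := df r u 0; rewrite addr0 dual_elt0 // addr0. Qed.

Lemma dual_eltD (f : N -> R) u v : dual_elt f -> f (u + v) = f u + f v.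
Proof. by move=> df; have := df 1 u v; rewrite scale1r mul1r. Qed.

Lemma dual_elt_sum (f : N -> R) n (r : 'I_n -> R) (ys : 'I_n -> N) : dual_elt f ->
  f (\sum_(i < n) r i *: ys i) = \sum_(i < n) r i * f (ys i).
Proof.
move=> df; rewrite (big_morph f (fun u v => dual_eltD u v df) (dual_elt0 df)).
by apply: eq_bigr => i _; rewrite dual_eltZ.
Qed.

Lemma order_ideal_ideal (x : N) : ideal (order_ideal x).
Proof.
split.
- by exists (fun _ => 0); split => // r u v; ring.
- move=> _ _ [f [df ->]] [g [dg ->]]; exists (fun z => f z + g z); split => //.
  by move=> r u v; rewrite df dg; ring.
- move=> r _ [f [df ->]]; exists (fun z => r * f z); split => //.
  by move=> c u v; rewrite df; ring.
Qed.

Lemma order_ideal_sub_prime (x y : N) f T : dual_elt f -> prime_ideal T ->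
  subid (order_ideal_quot y x) T -> T (f x) -> ~ T (f y) -> subid (order_ideal x) T.
Proof.
move=> df pT sYT Tfx nTfy _ [g [dg ->]]; have iT := prime_ideal_ideal pT.
pose h z := f y * g z - g y * f z.
have Thx : T (h x).
  apply: sYT; exists h; split => //; last by rewrite /h mulrC subrr.
  by move=> r u v; rewrite /h df dg; ring.
have : T (f y * g x).
  have -> : f y * g x = h x + g y * f x by rewrite /h; ring.
  exact: idealD iT Thx (idealMl _ iT Tfx).
by case/(prime_idealM pT).
Qed.

Lemma order_ideal_sub_trace (x : N) : subid (order_ideal x) (trace_ideal N).
Proof.
by move=> _ [f [df ->]]; exists 1%N, (fun _ => f), (fun _ => x); rewrite big_ord1.
Qed.

Lemma trace_ideal_sub n (ys : 'I_n -> N) J :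
  (forall z, exists r : 'I_n -> R, z = \sum_(i < n) r i *: ys i) ->
  ideal J -> (forall i, subid (order_ideal (ys i)) J) -> subid (trace_ideal N) J.
Proof.
move=> span iJ sJ _ [k [f [z [df ->]]]]; apply: ideal_sum => // i.
have [r ->] := span (z i); rewrite dual_elt_sum //.
by apply: ideal_sum => // j; apply: idealMl => //; apply: sJ; exists (f i).
Qed.

Hypothesis noeth : noetherian R.

Lemma order_ideal_sub_radical (x y : N) :
  ht_ge (order_ideal_quot y x) (order_ideal x) 2 ->
  subid (order_ideal y) (radical (order_ideal x)).
Proof.
move=> ht _ [f [df ->]]; apply: NNPP => nfy.
have [q [pq sxq minq] nqfy] := minimal_prime_notin noeth (order_ideal_ideal x) nfy.
have [p1 [pp1 sp1q nqp1 chain1]] := prime_chain_last (ht q pq sxq).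
have [p0 [pp0 sp0p1 np1p0 chain0]] := prime_chain_last (chain1 p1 pp1 (@subid_refl _ _)).
have sYp0 := prime_chain_sub (chain0 p0 pp0 (@subid_refl _ _)).
apply: (krull_principal_ideal noeth pp0 pp1 sp0p1 np1p0 sp1q nqp1 (x := f x)).
have qfx : q (f x) by apply: sxq; exists f.
have sp0q : subid p0 q by move=> r /sp0p1 /sp1q.
split => //; first exact: (adjoin_min (prime_ideal_ideal pq) sp0q qfx).
move=> T pT sT sTq; apply: minq => //.
apply: (order_ideal_sub_prime df pT _ (sT _ (adjoin_elt _ (ideal0 (prime_ideal_ideal pp0))))).
  by move=> r /sYp0 /(sub_adjoin (f x)) /sT.
by move/sTq.
Qed.

Lemma trace_height_le (x : N) m : subid (trace_ideal N) (radical (order_ideal x)) ->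
  ~ (forall a, trace_ideal N a) -> dual_gen_by N m -> ht_le (@zero_ideal R) (trace_ideal N) m.
Proof.
move=> trx ntr [g [dg gen]] ht; have ix := order_ideal_ideal x.
have nx1 : ~ radical (order_ideal x) 1.
  move=> [k]; rewrite expr1n => x1; apply: ntr => a.
  by apply: order_ideal_sub_trace; rewrite -[a]mulr1; apply: idealMl ix x1.
have [q minq _] := minimal_prime_notin noeth ix nx1; have [pq sxq _] := minq.
have iq := prime_ideal_ideal pq.
have trq : subid (trace_ideal N) q by move=> r /trx; apply: radical_sub_prime.
apply: (krull_height noeth (a := fun i => g i x) (zero_ideal_ideal R) _ (ht q pq trq)).
apply: (minimal_prime_mono minq).
  move=> _ [f [df ->]]; have [r fr] := gen f df.
  by exists 0, r; rewrite add0r fr.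
apply: (adjoin_family_min iq) => [r -> | i]; first exact: ideal0 iq.
by apply: sxq; exists (g i).
Qed.

End OrderIdeals.

Theorem proposition5p1 (R : comNzRingType) (N : lmodType R) (n : nat)
    (ys : 'I_n -> N) (x y : N) :
  noetherian R ->
  (forall z : N, exists r : 'I_n -> R, z = \sum_(i < n) r i *: ys i) ->
  (ht_ge (order_ideal_quot y x) (order_ideal x) 2 ->
     subid (order_ideal y) (radical (order_ideal x))) /\
  ((forall i : 'I_n, ht_ge (order_ideal_quot (ys i) x) (order_ideal x) 2) ->
     (forall a : R, radical (trace_ideal N) a <-> radical (order_ideal x) a) /\
     (~ (forall a : R, trace_ideal N a) ->
        forall m : nat, is_mu_dual N m -> ht_le (@zero_ideal R) (trace_ideal N) m)).
Proof.
move=> noeth span; split=> [|htx]; first exact: order_ideal_sub_radical.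
have trx : subid (trace_ideal N) (radical (order_ideal x)).
  apply: (trace_ideal_sub span (radical_ideal (order_ideal_ideal x))) => i.
  exact: order_ideal_sub_radical noeth x (ys i) (htx i).
split; first exact: (eq_radical (@order_ideal_sub_trace _ _ x) trx).
by move=> ntr m [gen _]; apply: trace_height_le noeth x m trx ntr gen.
Qed.
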